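(* Let $d > 0$ and $0<\alpha\le 1$. Then there is a constant $c = c(d,\alpha) > 0$, depending only on $d$ and $\alpha$, such that the following holds: for every $n \in \mathbb{N}$, every $m \in \{1,\ldots,n-1\}$, every $V \in G(n,n-m)$, and every purely $m$-unrectifiable measure $\mu$ on $\mathbb{R}^n$ satisfying \[ \limsup_{r \downarrow 0} \frac{\mu\bigl(B(x,2r)\bigr)}{\mu\bigl(B(x,r)\bigr)} < d \quad \text{for $\mu$-almost all } x \in \mathbb{R}^n, \] it holds that \[ \limsup_{r \downarrow 0} \frac{\mu\bigl( X(x,r,V,\alpha) \bigr)}{\mu\bigl( B(x,r) \bigr)} \ge c \] for $\mu$-almost every $x \in \mathbb{R}^n$.
   Context: A measure means a locally finite, nontrivial, Borel regular outer measure defined on all subsets of $\mathbb{R}^n$. $G(n,n-m)$ denotes the space of all $(n-m)$-dimensional linear subspaces of $\mathbb{R}^n$. $B(x,r)$ is the closed ball with center $x$ and radius $r$. For $x \in \mathbb{R}^n$, $V \in G(n,n-m)$, $0<\alpha\le1$, $r>0$: $X(x,V,\alpha) = \{ y \in \mathbb{R}^n : \operatorname{dist}(y-x,V) < \alpha|y-x| \}$ and $X(x,r,V,\alpha) = B(x,r) \cap X(x,V,\alpha)$. A set $A \subset \mathbb{R}^n$ is $m$-rectifiable if there are Lipschitz maps $f_i \colon \mathbb{R}^m \to \mathbb{R}^n$, $i=1,2,\ldots$, such that $\mathcal{H}^m\bigl(A \setminus \bigcup_i f_i(\mathbb{R}^m)\bigr) = 0$, where $\mathcal{H}^m$ is the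 $m$-dimensional Hausdorff measure. A measure $\mu$ on $\mathbb{R}^n$ is purely $m$-unrectifiable if $\mu(A) = 0$ for every $m$-rectifiable set $A \subset \mathbb{R}^n$. *)

From HB Require Import structures.
From mathcomp Require Import all_boot all_order all_algebra.
From mathcomp Require Import all_classical all_reals all_analysis.
Set Implicit Arguments. Unset Strict Implicit. Unset Printing Implicit Defensive.
Import Order.TTheory GRing.Theory Num.Theory.
Local Open Scope classical_set_scope.
Local Open Scope ring_scope.

Section Defs.
Variable R : realType.

Definition enorm (n : nat) (x : 'rV[R]_n) : R :=
  Num.sqrt (\sum_(i < n) (x ord0 i) ^+ 2).

Definition cball (n : nat) (x : 'rV[R]_n) (r : R) : set 'rV[R]_n :=
  [set y | enorm (y - x) <= r].

Definition eopen (n : nat) (U : set 'rV[R]_n) : Prop :=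
  forall x, U x -> exists2 r : R, 0 < r & [set y | enorm (y - x) < r] `<=` U.

Definition borel (n : nat) (A : set 'rV[R]_n) : Prop :=
  forall S : set (set 'rV[R]_n), sigma_algebra setT S -> (forall U, eopen U -> S U) -> S A.

Definition outer_measure_on (n : nat) (mu : set 'rV[R]_n -> \bar R) : Prop :=
  [/\ mu set0 = 0%E,
      (forall A, (0 <= mu A)%E),
      (forall A B, A `<=` B -> (mu A <= mu B)%E) &
      (forall F : nat -> set 'rV[R]_n,
          (mu (\bigcup_k F k) <= \sum_(k <oo) mu (F k))%E)].

Definition mu_measurable (n : nat) (mu : set 'rV[R]_n -> \bar R) (A : set 'rV[R]_n) :=
  forall E, mu E = (mu (E `&` A) + mu (E `&` ~` A))%E.

(* a "measure" in the sense of the paper: locally finite, nontrivial,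
   Borel regular outer measure on R^n *)
Definition is_measure (n : nat) (mu : set 'rV[R]_n -> \bar R) : Prop :=
  [/\ outer_measure_on mu,
      (forall x, exists2 r : R, 0 < r & (mu (cball x r) < +oo)%E),
      (exists A, mu A <> 0%E),
      (forall B, borel B -> mu_measurable mu B) &
      (forall A, exists B, [/\ borel B, A `<=` B & mu B = mu A])].

Definition ae (n : nat) (mu : set 'rV[R]_n -> \bar R) (P : 'rV[R]_n -> Prop) :=
  mu [set x | ~ P x] = 0%E.

(* diameter (of a nonempty set; the empty set gets diameter 0) *)
Definition diam (n : nat) (E : set 'rV[R]_n) : \bar R :=
  if pselect (E = set0) then 0%E
  else ereal_sup [set (enorm (x - y))%:E | x in E & y in E].

(* unnormalized Hausdorff delta-content and measure H^m *)
Definition hcontent (n m : nat) (delta : R) (A : set 'rV[R]_n) : \bar R :=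
  ereal_inf [set (\sum_(k <oo) ((fine (diam (E k))) ^+ m)%:E)%E
            | E in [set E : nat -> set 'rV[R]_n |
                      A `<=` \bigcup_k E k /\ forall k, (diam (E k) <= delta%:E)%E]].

Definition hausdorff (n m : nat) (A : set 'rV[R]_n) : \bar R :=
  ereal_sup [set hcontent m delta A | delta in [set delta : R | 0 < delta]].

Definition lipschitz (m n : nat) (f : 'rV[R]_m -> 'rV[R]_n) : Prop :=
  exists L : R, forall x y, enorm (f x - f y) <= L * enorm (x - y).

Definition rectifiable (n m : nat) (A : set 'rV[R]_n) : Prop :=
  exists f : nat -> 'rV[R]_m -> 'rV[R]_n,
    (forall i, lipschitz (f i)) /\
    hausdorff m (A `\` \bigcup_i range (f i)) = 0%E.

Definition purely_unrectifiable (n m : nat) (mu : set 'rV[R]_n -> \bar R) : Prop :=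
  forall A, rectifiable m A -> mu A = 0%E.

(* distance from z to the linear subspace spanned by the rows of V *)
Definition dist_sub (n : nat) (z : 'rV[R]_n) (V : 'M[R]_n) : R :=
  inf [set enorm (z - v) | v in [set v : 'rV[R]_n | (v <= V)%MS]].

Definition cone (n : nat) (x : 'rV[R]_n) (V : 'M[R]_n) (alpha : R) : set 'rV[R]_n :=
  [set y | dist_sub (y - x) V < alpha * enorm (y - x)].

Definition cone_r (n : nat) (x : 'rV[R]_n) (r : R) (V : 'M[R]_n) (alpha : R) :=
  cball x r `&` cone x V alpha.

Definition limsup0 (g : R -> R) : \bar R :=
  ereal_inf [set ereal_sup [set (g r)%:E | r in [set r : R | 0 < r < delta]]
            | delta in [set delta : R | 0 < delta]].

(* the mu_ratio mu(A)/mu(B) (both finite for small radii by local finiteness) *)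
Definition mu_ratio (n : nat) (mu : set 'rV[R]_n -> \bar R) (A B : set 'rV[R]_n) : R :=
  fine (mu A) / fine (mu B).

End Defs.

From Pilot Require Import Defs.
From HB Require Import structures.
From mathcomp Require Import all_boot all_order all_algebra.
From mathcomp Require Import all_classical all_reals all_analysis.
From mathcomp Require Import ring lra.
Import Order.TTheory GRing.Theory Num.Theory.
Local Open Scope classical_set_scope.
Local Open Scope ring_scope.
Set Implicit Arguments. Unset Strict Implicit.

(* Fix j with 24 <= alpha 2^j and put c = d^-j.  Call x sparse at scale delta if, for
   0 < r < delta, the ball B(x,r) has positive finite measure, the doubling ratio at x is
   below d and the cone ratio at x is below c.  If x, y are sparse, 2^j |y - x| < delta and
   y - x lies in the narrow cone X(0,V,alpha/2), then with s = |y - x| the ball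
   B(y, alpha s/8) lies in X(x,2s,V,alpha) while j doublings of it cover B(x,2s), so
   mu(B(x,2s)) <= d^j mu(X(x,2s,V,alpha)) < d^j c mu(B(x,2s)) = mu(B(x,2s)), absurd.
   Hence a set of sparse points of small diameter satisfies the cone condition
   alpha/2 |y - x| <= dist(y - x, V): the projection onto an m-dimensional complement of V
   is injective on it with Lipschitz inverse, and the McShane extension of that inverse
   shows the set is m-rectifiable, hence mu-null.  Off a null set, every point where the
   conclusion fails is sparse at some scale, and a grid cuts the sparse points into
   countably many pieces of small diameter. *)

Section EuclideanNorm.
Variables (R : realType) (n : nat).
Implicit Types v w x y z : 'rV[R]_n.

Lemma enorm_ge0 v : 0 <= enorm v.
Proof. exact: sqrtr_ge0. Qed.

Lemma enorm0 : enorm (0 : 'rV[R]_n) = 0.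
Proof. by rewrite /enorm big1 ?sqrtr0 // => i _; rewrite mxE expr0n. Qed.

Lemma enormN v : enorm (- v) = enorm v.
Proof. by rewrite /enorm; congr Num.sqrt; apply: eq_bigr => i _; rewrite mxE sqrrN. Qed.

Lemma enorm_distC v w : enorm (v - w) = enorm (w - v).
Proof. by rewrite -enormN opprB. Qed.

Lemma enorm_coord_le v i : `|v ord0 i| <= enorm v.
Proof.
rewrite /enorm -sqrtr_sqr ler_sqrt; last by apply: sumr_ge0 => j _; rewrite sqr_ge0.
by rewrite (bigD1 i) //= lerDl; apply: sumr_ge0 => j _; rewrite sqr_ge0.
Qed.

Lemma enorm_le_sum_norm v : enorm v <= \sum_i `|v ord0 i|.
Proof.
have S0 : 0 <= \sum_i `|v ord0 i| by apply: sumr_ge0.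
rewrite /enorm -(ger0_norm S0) -sqrtr_sqr ler_sqrt ?sqr_ge0 // expr2 mulr_suml.
apply: ler_sum => i _; rewrite -real_normK ?num_real // expr2 ler_wpM2l //.
by rewrite (bigD1 i) //= lerDl; apply: sumr_ge0.
Qed.

Lemma cauchy_schwarz_sum (I : finType) (a b : I -> R) :
  (\sum_i a i * b i) ^+ 2 <= (\sum_i a i ^+ 2) * (\sum_i b i ^+ 2).
Proof.
set A := \sum_i a i ^+ 2; set B := \sum_i b i ^+ 2; set P := \sum_i a i * b i.
have B0 : 0 <= B by apply: sumr_ge0 => i _; rewrite sqr_ge0.
have sum_sq : B * (A * B - P ^+ 2) = \sum_i (B * a i - P * b i) ^+ 2.
  have -> : \sum_i (B * a i - P * b i) ^+ 2 =
      \sum_i (B ^+ 2 * a i ^+ 2 - (2 * B * P) * (a i * b i) + P ^+ 2 * b i ^+ 2).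
    by apply: eq_bigr => i _; ring.
  by rewrite big_split /= sumrB -!mulr_sumr -/A -/B -/P; ring.
have [Bz|Bn0] := eqVneq B 0.
  have b0 i : b i = 0.
    apply/eqP; rewrite -sqrf_eq0; apply/eqP.
    by apply: (psumr_eq0P _ Bz) => // j _; rewrite sqr_ge0.
  by rewrite /P big1 ?expr0n ?Bz ?mulr0 // => i _; rewrite b0 mulr0.
have Bpos : 0 < B by rewrite lt_def Bn0 B0.
rewrite -subr_ge0 -(pmulr_rge0 _ Bpos) sum_sq.
by apply: sumr_ge0 => i _; rewrite sqr_ge0.
Qed.

Lemma enormD v w : enorm (v + w) <= enorm v + enorm w.
Proof.
pose P := \sum_i v ord0 i * w ord0 i.
have sqD : \sum_i (v + w) ord0 i ^+ 2 =
    \sum_i v ord0 i ^+ 2 + 2 * P + \sum_i w ord0 i ^+ 2.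
  rewrite /P mulr_sumr -!big_split /=; apply: eq_bigr => i _; rewrite mxE; ring.
have P_le : P <= enorm v * enorm w.
  rewrite /enorm -sqrtrM; last by apply: sumr_ge0 => i _; rewrite sqr_ge0.
  have [P0|P0] := leP P 0; first by apply: (le_trans P0); rewrite sqrtr_ge0.
  rewrite -(ger0_norm (ltW P0)) -sqrtr_sqr ler_sqrt ?cauchy_schwarz_sum //.
  by rewrite mulr_ge0 // sumr_ge0 // => i _; rewrite sqr_ge0.
rewrite -(ger0_norm (addr_ge0 (enorm_ge0 v) (enorm_ge0 w))).
rewrite {1}/enorm -sqrtr_sqr ler_sqrt ?sqr_ge0 // sqD sqrrD /enorm.
rewrite !sqr_sqrtr; try by apply: sumr_ge0 => i _; rewrite sqr_ge0.
by rewrite lerD2r lerD2l; move: P_le; rewrite /enorm mulr2n; lra.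
Qed.

Lemma enorm_distD x y z : enorm (x - z) <= enorm (x - y) + enorm (y - z).
Proof. by have := enormD (x - y) (y - z); rewrite addrA subrK. Qed.

Lemma le_cball x r t : r <= t -> cball x r `<=` cball x t.
Proof. by move=> rt z; rewrite /cball /= => /le_trans; apply. Qed.

Lemma cball_sub_cball x y r : cball x r `<=` cball y (r + enorm (y - x)).
Proof.
move=> z; rewrite /cball /= => zx.
by apply: le_trans (enorm_distD z x y) _; rewrite (enorm_distC x y) lerD2r.
Qed.

End EuclideanNorm.

Lemma enorm_mulmx (R : realType) k n (u : 'rV[R]_k) (N : 'M[R]_(k, n)) :
  enorm (u *m N) <= enorm u * \sum_j \sum_i `|N i j|.
Proof.
apply: (le_trans (enorm_le_sum_norm _)); rewrite mulr_sumr; apply: ler_sum => j _.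
rewrite mxE mulr_sumr; apply: (le_trans (ler_norm_sum _ _ _)); apply: ler_sum => i _.
by rewrite normrM ler_wpM2r // enorm_coord_le.
Qed.

Section DistanceToSubspace.
Variables (R : realType) (n : nat) (V : 'M[R]_n).
Implicit Types x y z : 'rV[R]_n.

Let dists z := [set enorm (z - v) | v in [set v : 'rV[R]_n | (v <= V)%MS]].

Let dists_lbound z : has_lbound (dists z).
Proof. by exists 0 => _ [v _ <-]; exact: enorm_ge0. Qed.

Let dists_neq0 z : dists z !=set0.
Proof. by exists (enorm (z - 0)), 0 => //=; rewrite sub0mx. Qed.

Lemma dist_sub_ge0 z : 0 <= dist_sub z V.
Proof. by apply: lb_le_inf (dists_neq0 z) _ => _ [v _ <-]; exact: enorm_ge0. Qed.

Lemma dist_sub_le z v : (v <= V)%MS -> dist_sub z V <= enorm (z - v).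
Proof. by move=> Vv; apply: (ge_inf (dists_lbound z)); exists v. Qed.

Lemma dist_subD z w : dist_sub (z + w) V <= dist_sub z V + enorm w.
Proof.
rewrite -lerBlDr; apply: lb_le_inf (dists_neq0 z) _ => _ [v Vv <-]; rewrite lerBlDr.
apply: le_trans (dist_sub_le (z + w) Vv) _.
by have := enormD (z - v) w; rewrite addrAC.
Qed.

Lemma exists_compl_coords : exists (P : 'M[R]_(n, \rank (V^C)%MS))
    (N : 'M[R]_(\rank (V^C)%MS, n)), forall w : 'rV[R]_n, (w - w *m P *m N <= V)%MS.
Proof.
exists (proj_mx (V^C)%MS V *m pinvmx (row_base (V^C)%MS)), (row_base (V^C)%MS) => w.
have wP_base : (w *m proj_mx (V^C)%MS V <= row_base (V^C)%MS)%MS.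
  by rewrite eq_row_base proj_mx_sub.
rewrite (mulmxA w) (mulmxKpV wP_base); apply: proj_mx_compl_sub.
by apply: submx_full; rewrite addsmxC addsmx_compl_full.
Qed.

Lemma cball_sub_cone alpha x y : 0 < alpha <= 1 ->
    dist_sub (y - x) V < alpha / 2 * enorm (y - x) ->
  cball y (alpha * enorm (y - x) / 8) `<=` cone_r x (2 * enorm (y - x)) V alpha.
Proof.
move=> /andP [a0 a1] yx_cone z; rewrite /cball /= => zy.
set s := enorm (y - x) in yx_cone zy *.
have zx_le := enorm_distD z y x.
have zx_ge := enorm_distD y z x; rewrite (enorm_distC y z) in zx_ge.
have dist_zx := dist_subD (y - x) (z - y).
rewrite addrC addrA subrK in dist_zx; rewrite -/s in zx_le zx_ge dist_zx.
have s0 : 0 <= s := enorm_ge0 _.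
have as_le : alpha * s <= s by rewrite ler_piMl.
split; rewrite /cball /=; first by lra.
have : alpha * (s - alpha * s / 8) <= alpha * enorm (z - x) by rewrite ler_pM2l //; lra.
have : alpha * (alpha * s) <= alpha * s by rewrite ler_piMl // mulr_ge0 // ltW.
rewrite /cone /=; lra.
Qed.

End DistanceToSubspace.

Section Rectifiability.
Variable R : realType.

Lemma diam_ge0 n (E : set 'rV[R]_n) : (0 <= diam E)%E.
Proof.
rewrite /diam; case: pselect => [//|E_neq0].
have [x Ex] : E !=set0 by apply/set0P/eqP.
apply: le_ereal_sup_tmp; exists (enorm (x - x))%:E; last by rewrite subrr enorm0.
by exists x => //; exists x.
Qed.

(* For m = 0 each piece of a cover costs diam^0 = 1, so H^0(set0) = +oo. *)
Lemma hausdorff_set0 n m : (0 < m)%N -> hausdorff m (set0 : set 'rV[R]_n) = 0%E.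
Proof.
move=> m0.
have diam_set0 : diam (set0 : set 'rV[R]_n) = 0%E by rewrite /diam; case: pselect.
have hcontent_set0 delta : 0 < delta -> hcontent m delta (set0 : set 'rV[R]_n) = 0%E.
  move=> delta0; apply/eqP; rewrite eq_le; apply/andP; split.
    apply: ge_ereal_inf; exists (\sum_(k <oo) ((fine (diam (@set0 'rV[R]_n))) ^+ m)%:E)%E.
      by exists (fun=> set0) => //; split => // k; rewrite diam_set0 lee_fin ltW.
    by rewrite eseries0 // => k _ _; rewrite diam_set0 /= expr0n gtn_eqF.
  apply: le_ereal_inf_tmp => _ [E _ <-]; apply: nneseries_ge0 => k _ _.
  by rewrite lee_fin exprn_ge0 // fine_ge0 // diam_ge0.
apply/eqP; rewrite eq_le; apply/andP; split.
  by apply: ge_ereal_sup => _ [delta delta0 <-]; rewrite hcontent_set0.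
apply: le_ereal_sup_tmp; exists (hcontent m 1 (set0 : set 'rV[R]_n)); first by exists 1 => //=.
by rewrite hcontent_set0.
Qed.

Lemma rectifiable_sub_lipschitz_range n m (S : set 'rV[R]_n) (f : 'rV[R]_m -> 'rV[R]_n) :
  (0 < m)%N -> Defs.lipschitz f -> S `<=` range f -> rectifiable m S.
Proof.
move=> m0 f_lip Sf; exists (fun=> f); split => [_ //|].
rewrite (_ : _ `\` _ = set0) ?hausdorff_set0 //.
by apply/seteqP; split => // x [/Sf fx]; apply; exists 0%N.
Qed.

Lemma mcshane_extension (T : Type) r (S : set T) (p : T -> 'rV[R]_r) (g : T -> R) (L : R) :
    S !=set0 -> 0 <= L ->
    (forall q q', S q -> S q' -> g q' - g q <= L * enorm (p q' - p q)) ->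
  exists f : 'rV[R]_r -> R, (forall q, S q -> f (p q) = g q) /\
    forall z z', `|f z - f z'| <= L * enorm (z - z').
Proof.
move=> [q0 Sq0] L0 g_lip.
pose vals z := [set g q + L * enorm (z - p q) | q in S].
have vals_neq0 z : vals z !=set0 by exists (g q0 + L * enorm (z - p q0)), q0.
have vals_has_lbound z : has_lbound (vals z).
  exists (g q0 - L * enorm (z - p q0)) => _ [q Sq <-].
  have := g_lip q q0 Sq Sq0.
  have := ler_wpM2l L0 (enorm_distD (p q0) z (p q)).
  by rewrite (enorm_distC (p q0) z) mulrDr; lra.
pose f z := inf (vals z).
have f_le z z' : f z <= f z' + L * enorm (z - z').
  rewrite -lerBlDr; apply: lb_le_inf (vals_neq0 z') _ => _ [q Sq <-]; rewrite lerBlDr.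
  apply: le_trans (ge_inf (vals_has_lbound z) _) _; first by exists q.
  by have := ler_wpM2l L0 (enorm_distD z z' (p q)); rewrite mulrDr; lra.
exists f; split => [q Sq|z z'].
  apply/eqP; rewrite eq_le; apply/andP; split.
    by apply: (ge_inf (vals_has_lbound _)); exists q => //; rewrite subrr enorm0 mulr0 addr0.
  apply: lb_le_inf (vals_neq0 _) _ => _ [q' Sq' <-].
  by have := g_lip q' q Sq' Sq; lra.
rewrite ler_norml; apply/andP; split; last by have := f_le z z'; lra.
by have := f_le z' z; rewrite enorm_distC; lra.
Qed.

Lemma lipschitz_inverse_rectifiable n r (S : set 'rV[R]_n) (p : 'rV[R]_n -> 'rV[R]_r) (L : R) :
    (0 < r)%N -> 0 <= L ->
    (forall x y, S x -> S y -> enorm (y - x) <= L * enorm (p y - p x)) ->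
  rectifiable r S.
Proof.
move=> r0 L0 p_inv_lip.
have [->|/set0P S_neq0] := eqVneq S set0.
  apply: (@rectifiable_sub_lipschitz_range _ _ _ (fun=> 0)) => //.
  by exists 0 => z z'; rewrite subrr enorm0 mul0r.
have /choice [f f_ext] : forall i : 'I_n, exists f : 'rV[R]_r -> R,
    (forall q, S q -> f (p q) = q ord0 i) /\
    forall z z', `|f z - f z'| <= L * enorm (z - z').
  move=> i; apply: mcshane_extension => // q q' Sq Sq'.
  apply: le_trans (p_inv_lip q q' Sq Sq'); apply: le_trans (enorm_coord_le _ i).
  by rewrite !mxE ler_norm.
apply: (@rectifiable_sub_lipschitz_range _ _ _ (fun z => \row_i f i z)) => //.
  exists (L *+ n) => z z'; apply: le_trans (enorm_le_sum_norm _) _.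
  have -> : L *+ n * enorm (z - z') = \sum_(i < n) L * enorm (z - z').
    by rewrite sumr_const card_ord mulrnAl.
  by apply: ler_sum => i _; rewrite !mxE; case: (f_ext i).
move=> x Sx; exists (p x) => //; apply/rowP => i.
by rewrite mxE; case: (f_ext i) => -> .
Qed.

Lemma cone_condition_rectifiable n m (V : 'M[R]_n) (S : set 'rV[R]_n) (beta : R) :
    (0 < m <= n)%N -> \rank V = (n - m)%N -> 0 < beta ->
    (forall x y, S x -> S y -> beta * enorm (y - x) <= dist_sub (y - x) V) ->
  rectifiable m S.
Proof.
move=> /andP [m0 mn] rankV beta0 S_cone.
have rankVC : \rank (V^C)%MS = m by rewrite mxrank_compl rankV subKn.
have [P [N PN]] := exists_compl_coords V.
pose C : R := \sum_j \sum_i `|N i j|.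
have C0 : 0 <= C by apply: sumr_ge0 => j _; apply: sumr_ge0.
rewrite -rankVC; apply: (@lipschitz_inverse_rectifiable _ _ _ (fun q => q *m P) (C / beta)).
- by rewrite rankVC.
- exact: divr_ge0 C0 (ltW beta0).
move=> x y Sx Sy; rewrite -mulmxBl mulrAC ler_pdivlMr // mulrC.
apply: le_trans (S_cone x y Sx Sy) _; apply: le_trans (dist_sub_le _ (PN (y - x))) _.
by rewrite opprB addrC subrK mulrC; exact: enorm_mulmx.
Qed.

End Rectifiability.

Lemma floor_div_eq_dist_lt (R : realType) (h a b : R) : 0 < h ->
  Num.floor (a / h) = Num.floor (b / h) -> `|a - b| < h.
Proof.
move=> h0 floor_eq.
have := floor_itv (a / h); have := floor_itv (b / h).
rewrite floor_eq intrD => /andP [b1 b2] /andP [a1 a2].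
have : `|a / h - b / h| < 1 by rewrite ltr_norml; lra.
by rewrite -mulrBl normrM [`|h^-1|]gtr0_norm ?invr_gt0 // ltr_pdivrMr // mul1r.
Qed.

Lemma exists_inv_succ_lt (R : realType) (t : R) : 0 < t -> exists k : nat, k.+1%:R^-1 < t.
Proof.
move=> t0; exists (Num.truncn t^-1).
by rewrite invf_plt ?posrE ?ltr0Sn // truncnS_gt.
Qed.

Section OuterMeasure.
Variables (R : realType) (n : nat) (mu : set 'rV[R]_n -> \bar R).
Hypothesis mu_outer : outer_measure_on mu.

Lemma omeas_ge0 A : (0 <= mu A)%E.
Proof. by case: mu_outer. Qed.

Lemma omeas_le A B : A `<=` B -> (mu A <= mu B)%E.
Proof. by case: mu_outer => _ _ + _; apply. Qed.

Lemma omeas_null_sub A B : A `<=` B -> mu B = 0%E -> mu A = 0%E.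
Proof. by move=> AB B0; apply/eqP; rewrite eq_le omeas_ge0 andbT -B0 omeas_le. Qed.

Lemma omeas_null_bigcup (F : nat -> set 'rV[R]_n) :
  (forall k, mu (F k) = 0%E) -> mu (\bigcup_k F k) = 0%E.
Proof.
move=> F0; apply/eqP; rewrite eq_le omeas_ge0 andbT.
by case: mu_outer => _ _ _ /(_ F) /le_trans; apply; rewrite eseries0.
Qed.

Lemma omeas_null_setU A B : mu A = 0%E -> mu B = 0%E -> mu (A `|` B) = 0%E.
Proof.
move=> A0 B0; rewrite -bigcup2E; apply: omeas_null_bigcup => -[|[|k]] //=.
by case: mu_outer.
Qed.

Lemma omeas_null_setD A B : mu (A `\` B) = 0%E -> mu B = 0%E -> mu A = 0%E.
Proof.
move=> AB0 B0; apply: omeas_null_sub (omeas_null_setU AB0 B0) => x Ax.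
by have [Bx|nBx] := pselect (B x); [right|left].
Qed.

Lemma omeas_fin_num_sub A B : A `<=` B -> mu B \is a fin_num -> mu A \is a fin_num.
Proof.
move=> AB; rewrite !ge0_fin_numE ?omeas_ge0 //; exact: le_lt_trans (omeas_le AB).
Qed.

Lemma fine_omeas_le A B : A `<=` B -> mu B \is a fin_num -> fine (mu A) <= fine (mu B).
Proof.
by move=> AB Bfin; rewrite fine_le ?omeas_le ?(omeas_fin_num_sub AB).
Qed.

Lemma omeas_null_small_pieces (A : set 'rV[R]_n) (F : nat -> set 'rV[R]_n) (eta : nat -> R) :
    (forall k, 0 < eta k) -> A `<=` \bigcup_k F k ->
    (forall k S, S `<=` F k -> (forall y z, S y -> S z -> enorm (y - z) < eta k) ->
       mu S = 0%E) ->
  mu A = 0%E.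
Proof.
move=> eta0 AF pieces_null.
pose h k := eta k / n.+1%:R.
have h0 k : 0 < h k by rewrite divr_gt0 ?ltr0Sn.
pose cell (kz : nat * 'rV[int]_n) :=
  [set x | F kz.1 x /\ forall i, Num.floor (x ord0 i / h kz.1) = kz.2 ord0 i].
apply: (@omeas_null_sub _ (\bigcup_j if unpickle j is Some kz then cell kz else set0)).
  move=> x /AF [k _ Fx]; exists (pickle (k, \row_i Num.floor (x ord0 i / h k))) => //.
  by rewrite pickleK; split => // i; rewrite mxE.
apply: omeas_null_bigcup => j; case: (unpickle j) => [[k z]|]; last by case: mu_outer.
apply: (pieces_null k); first by move=> x [].
move=> y w [_ yz] [_ wz]; apply: le_lt_trans (enorm_le_sum_norm _) _.
have coord_close i : `|(y - w) ord0 i| <= h k.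
  by rewrite !mxE ltW // floor_div_eq_dist_lt // yz wz.
apply: le_lt_trans (ler_sum _ (fun i _ => coord_close i)) _.
rewrite sumr_const card_ord /h -[_ *+ n]mulr_natr mulrAC ltr_pdivrMr ?ltr0Sn //.
by rewrite ltr_pM2l // ltr_nat.
Qed.

Lemma omeas_null_ball_points :
  mu [set x | exists2 t, 0 < t & mu (cball x t) = 0%E] = 0%E.
Proof.
apply: (@omeas_null_small_pieces _ (fun k => [set x | mu (cball x k.+1%:R^-1) = 0%E])
  (fun k => k.+1%:R^-1)).
- by move=> k; rewrite invr_gt0 ltr0Sn.
- move=> x [t t0 null_t]; have [k kt] := exists_inv_succ_lt t0; exists k => //=.
  exact: omeas_null_sub (le_cball (ltW kt)) null_t.
move=> k S S_null S_small.
have [->|/set0P [p Sp]] := eqVneq S set0; first by case: mu_outer.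
by apply: omeas_null_sub (S_null p Sp) => y Sy; exact: ltW (S_small y p Sy Sp).
Qed.

End OuterMeasure.

Lemma limsup0_lt (R : realType) (g : R -> R) (a : R) : (limsup0 g < a%:E)%E ->
  exists2 delta, 0 < delta & forall r, 0 < r < delta -> g r < a.
Proof.
move=> /ereal_inf_lt [_ [delta delta0 <-]] sup_lt; exists delta => // r r_delta.
by rewrite -lte_fin; apply: le_lt_trans sup_lt; apply: ereal_sup_ubound; exists r.
Qed.

Section SparsePoints.
Variables (R : realType) (n : nat) (V : 'M[R]_n) (mu : set 'rV[R]_n -> \bar R).
Variables (d alpha c : R) (j : nat).
Hypothesis mu_outer : outer_measure_on mu.

Definition sparse_point (delta : R) (x : 'rV[R]_n) :=
  forall r, 0 < r < delta ->
  [/\ (0 < mu (cball x r) < +oo)%E,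
      mu_ratio mu (cball x (2 * r)) (cball x r) < d &
      mu_ratio mu (cone_r x r V alpha) (cball x r) < c].

Let sparse_ball delta x r : sparse_point delta x -> 0 < r < delta ->
  0 < fine (mu (cball x r)) /\ mu (cball x r) \is a fin_num.
Proof.
move=> x_sparse /x_sparse [/andP [pos fin] _ _]; split; first by rewrite fine_gt0 ?pos.
by rewrite ge0_fin_numE ?(omeas_ge0 mu_outer).
Qed.

Lemma sparse_point_doubling delta y rho i : 0 <= d ->
    sparse_point delta y -> 0 < rho -> 2 ^+ i * rho < delta ->
  fine (mu (cball y (2 ^+ i * rho))) <= d ^+ i * fine (mu (cball y rho)).
Proof.
move=> d0 y_sparse rho0; elim: i => [|i IH] lt_delta; first by rewrite !expr0 !mul1r.
have u0 : 0 < 2 ^+ i * rho by rewrite mulr_gt0 // exprn_gt0.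
have u_lt : 2 ^+ i * rho < delta.
  by apply: le_lt_trans lt_delta; rewrite exprS -mulrA ler_peMl ?ler1n // ltW.
have u_range : 0 < 2 ^+ i * rho < delta by rewrite u0.
have [Bu_pos _] := sparse_ball y_sparse u_range.
have [_ doubling _] := y_sparse _ u_range.
rewrite /mu_ratio ltr_pdivrMr // in doubling.
rewrite exprS -mulrA; apply: le_trans (ltW doubling) _.
by rewrite exprS -mulrA ler_wpM2l // IH.
Qed.

Lemma sparse_point_cover x :
    (forall t, 0 < t -> mu (cball x t) <> 0%E) ->
    (exists2 r, 0 < r & (mu (cball x r) < +oo)%E) ->
    (limsup0 (fun r => mu_ratio mu (cball x (2 * r)) (cball x r)) < d%:E)%E ->
    (limsup0 (fun r => mu_ratio mu (cone_r x r V alpha) (cball x r)) < c%:E)%E ->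
  (\bigcup_k sparse_point k.+1%:R^-1) x.
Proof.
move=> balls_neq0 [r0 r0_pos r0_fin] /limsup0_lt [d1 d1_pos doubling].
move=> /limsup0_lt [d2 d2_pos cone_small].
have min_pos : 0 < Num.min r0 (Num.min d1 d2) by rewrite !lt_min r0_pos d1_pos d2_pos.
have [k] := exists_inv_succ_lt min_pos.
rewrite !lt_min => /andP [k_r0 /andP [k_d1 k_d2]].
exists k => // r /andP [r_pos r_k]; split.
- rewrite lt0e (omeas_ge0 mu_outer) andbT; apply/andP; split; first exact/eqP/balls_neq0.
  by apply: le_lt_trans r0_fin; apply/(omeas_le mu_outer)/le_cball/ltW/(lt_trans r_k).
- by apply: doubling; rewrite r_pos (lt_trans r_k).
- by apply: cone_small; rewrite r_pos (lt_trans r_k).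
Qed.

Section ConeCondition.
Hypotheses (d0 : 0 < d) (alpha01 : 0 < alpha <= 1).
Hypotheses (alpha_j : 24 <= alpha * 2 ^+ j) (cd_j : c * d ^+ j <= 1).

Lemma sparse_points_off_cone delta x y :
    sparse_point delta x -> sparse_point delta y -> enorm (y - x) * 2 ^+ j < delta ->
  alpha / 2 * enorm (y - x) <= dist_sub (y - x) V.
Proof.
move=> x_sparse y_sparse near; rewrite leNgt; apply/negP => yx_cone.
have /andP [a0 a1] := alpha01.
have cone_ball := cball_sub_cone alpha01 yx_cone.
have ball_ball := @cball_sub_cball _ _ x y (2 * enorm (y - x)).
have alpha_K := alpha_j.
set s := enorm (y - x) in near yx_cone cone_ball ball_ball.
set rho := alpha * s / 8 in cone_ball.
set K : R := 2 ^+ j in alpha_K near.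
have s0 : 0 < s.
  rewrite lt_def enorm_ge0 andbT; apply: contraTneq yx_cone => ->.
  by rewrite mulr0 ltNge dist_sub_ge0.
have rho0 : 0 < rho by rewrite /rho; nra.
have two_s : 0 < 2 * s < delta by apply/andP; split; nra.
have Krho : 0 < K * rho < delta by apply/andP; split; rewrite /rho; nra.
have [Bx_pos Bx_fin] := sparse_ball x_sparse two_s.
have [_ By_fin] := sparse_ball y_sparse Krho.
have [_ _ cone_small] := x_sparse _ two_s.
rewrite /mu_ratio ltr_pdivrMr // in cone_small.
have Bx_le : fine (mu (cball x (2 * s))) <= fine (mu (cball y (K * rho))).
  apply: (fine_omeas_le mu_outer _ By_fin); apply: subset_trans ball_ball (le_cball _).
  by have := ler_wpM2r (ltW s0) alpha_K; rewrite /rho; lra.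
have By_le : fine (mu (cball y (K * rho))) <= d ^+ j * fine (mu (cball y rho)).
  by apply: sparse_point_doubling (ltW d0) y_sparse rho0 _; case/andP: Krho.
have Cy_le : fine (mu (cball y rho)) <= fine (mu (cone_r x (2 * s) V alpha)).
  apply: (fine_omeas_le mu_outer cone_ball).
  by apply: (omeas_fin_num_sub mu_outer _ Bx_fin) => z [].
set Bx := fine (mu (cball x (2 * s))) in Bx_pos Bx_le cone_small *.
set Cx := fine (mu (cone_r x (2 * s) V alpha)) in Cy_le cone_small *.
have dj0 : 0 < d ^+ j by rewrite exprn_gt0.
have : d ^+ j * Cx < d ^+ j * (c * Bx) by rewrite ltr_pM2l.
have : d ^+ j * (c * Bx) <= Bx by rewrite mulrA (mulrC (d ^+ j)) ler_piMl // ltW.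
have := ler_wpM2l (ltW dj0) Cy_le.
lra.
Qed.

Lemma sparse_piece_rectifiable m delta (S : set 'rV[R]_n) :
    (0 < m <= n)%N -> \rank V = (n - m)%N -> S `<=` sparse_point delta ->
    (forall x y, S x -> S y -> enorm (x - y) < delta / 2 ^+ j) ->
  rectifiable m S.
Proof.
move=> mn rankV S_sparse S_small.
have [a0 _] := andP alpha01.
apply: (@cone_condition_rectifiable _ _ _ V _ (alpha / 2) mn rankV); first by rewrite divr_gt0.
move=> x y Sx Sy; apply: sparse_points_off_cone (S_sparse _ Sx) (S_sparse _ Sy) _.
by rewrite -ltr_pdivlMr ?exprn_gt0 //; exact: S_small.
Qed.

End ConeCondition.

End SparsePoints.

Lemma exists_ge_mul_exp2 (R : realType) (b a : R) : 0 < a -> exists j : nat, b <= a * 2 ^+ j.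
Proof.
move=> a0; exists (Num.truncn (b / a)).
rewrite mulrC -ler_pdivrMr //; apply/ltW/(lt_le_trans (truncnS_gt _)).
by rewrite -natrX ler_nat ltn_expl.
Qed.

Unset Implicit Arguments.

Theorem theorem5p1 (R : realType) (d alpha : R) :
  0 < d -> 0 < alpha <= 1 ->
  exists2 c : R, 0 < c &
    forall (n m : nat) (V : 'M[R]_n) (mu : set 'rV[R]_n -> \bar R),
      (1 <= m < n)%N ->
      \rank V = (n - m)%N ->
      is_measure mu ->
      purely_unrectifiable m mu ->
      ae mu (fun x => (limsup0 (fun r => mu_ratio mu (cball x (2 * r)) (cball x r))
                       < d%:E)%E) ->
      ae mu (fun x => (c%:E <=
                       limsup0 (fun r => mu_ratio mu (cone_r x r V alpha) (cball x r)))%E).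
Proof.
move=> d0 alpha01; have [a0 _] := andP alpha01.
have [j alpha_j] := exists_ge_mul_exp2 24 a0.
exists (d ^+ j)^-1 => [|n m V mu /andP [m0 mn] rankV [mu_outer mu_loc _ _ _] mu_pu doubling].
  by rewrite invr_gt0 exprn_gt0.
have cd_j : (d ^+ j)^-1 * d ^+ j <= 1 by rewrite mulVf // expf_neq0 // gt_eqF.
rewrite /ae in doubling *.
apply: (omeas_null_setD mu_outer _
  (omeas_null_setU mu_outer doubling (omeas_null_ball_points mu_outer))).
apply: (@omeas_null_small_pieces _ _ _ mu_outer _
  (fun k => sparse_point V mu d alpha (d ^+ j)^-1 k.+1%:R^-1)
  (fun k => k.+1%:R^-1 / 2 ^+ j)).
- by move=> k; rewrite divr_gt0 ?invr_gt0 ?ltr0Sn ?exprn_gt0.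
- move=> x [bad_x /not_orP [Dx Zx]].
  apply: (sparse_point_cover mu_outer _ (mu_loc x) (contrapT Dx)).
    by move=> t t0 null_t; apply: Zx; exists t.
  by rewrite ltNge; apply/negP.
move=> k S S_sparse S_small; apply: mu_pu.
apply: (sparse_piece_rectifiable mu_outer d0 alpha01 alpha_j cd_j _ rankV S_sparse) => //.
by rewrite m0 ltnW.
Qed.
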